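(* Let $G$ be a vigorous subgroup of $\operatorname{Homeo}(\mathfrak{C})$ and let $U\in K_{\mathfrak{C}}$. Then the set $$X_{G,U}:=\{\gamma\in G: \text{there is a proper clopen subset } V \text{ of } U \text{ with } \operatorname{supp}(\gamma)\subseteq V\}$$ generates $\operatorname{pstab}_G(\mathfrak{C}\setminus U)$.
   Context: $\mathfrak{C}$ denotes a Cantor space (a space homeomorphic to $\{0,1\}^\omega$). Groups of homeomorphisms act on the right, and products are composed left to right. $K_{\mathfrak{C}}$ denotes the set of non-empty proper clopen subsets of $\mathfrak{C}$. For $\gamma\in\operatorname{Homeo}(\mathfrak{C})$, $\operatorname{supp}(\gamma)=\{p\in\mathfrak{C}: p\gamma\neq p\}$. For $G\le\operatorname{Homeo}(\mathfrak{C})$ and $A\subseteq\mathfrak{C}$, $\operatorname{pstab}_G(A)=\{g\in G: pg=p \text{ for all } p\in A\}$. A subset $S\subseteq \operatorname{Homeo}(\mathfrak{C})$ is vigorous if for all clopen $A,B,C\subseteq\mathfrak{C}$ with $B,C$ non-empty proper subsets of $A$ there is $\gamma\in S$ with $\operatorname{supp}(\gamma)\subseteq A$ and $B\gamma\subseteq C$. *)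

From HB Require Import structures.
From mathcomp Require Import all_boot all_order all_algebra.
From mathcomp Require Import all_classical all_reals topology cantor.
Set Implicit Arguments. Unset Strict Implicit. Unset Printing Implicit Defensive.
Local Open Scope classical_set_scope.

Notation CS := cantor_space.

Definition is_homeo_pair (f g : CS -> CS) : Prop :=
  continuous f /\ continuous g /\ cancel f g /\ cancel g f.

Definition is_homeo (f : CS -> CS) : Prop := exists g, is_homeo_pair f g.

Definition homeo_subgroup (G : set (CS -> CS)) : Prop :=
  [/\ (forall f, G f -> is_homeo f),
      G id,
      (forall f g, G f -> G g -> G (g \o f))
    & (forall f, G f -> exists2 g, G g & is_homeo_pair f g)].

(* support: points moved by f (no closure, as in the paper) *)
Definition supp (f : CS -> CS) : set CS := [set p | f p <> p].

Definition pstab (G : set (CS -> CS)) (A : set CS) : set (CS -> CS) :=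
  [set g | G g /\ forall p, A p -> g p = p].

Definition proper_subset (B A : set CS) : Prop := B `<=` A /\ B <> A.

Definition vigorous (S : set (CS -> CS)) : Prop :=
  forall A B C : set CS, clopen A -> clopen B -> clopen C ->
    B <> set0 -> C <> set0 -> proper_subset B A -> proper_subset C A ->
    exists2 g, S g & supp g `<=` A /\ g @` B `<=` C.

Inductive gen (X : set (CS -> CS)) : (CS -> CS) -> Prop :=
| gen_id : gen X id
| gen_mul : forall x g, X x -> gen X g -> gen X (x \o g)
| gen_inv : forall x x' g, X x -> is_homeo_pair x x' -> gen X g -> gen X (x' \o g).

Definition XGU (G : set (CS -> CS)) (U : set CS) : set (CS -> CS) :=
  [set g | G g /\ exists V : set CS, clopen V /\ proper_subset V U /\ supp g `<=` V].

From mathcomp Require Import all_boot all_order all_algebra.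
From mathcomp Require Import all_classical all_reals topology cantor.
Local Open Scope classical_set_scope.

(* Let g fix the complement of U pointwise.  For the converse we write g = b \o a with b, a in
   X_{G,U}, following a fragmentation argument:
   - pick p in U; in the perfect zero-dimensional space CS choose a clopen
     Y <= U containing p and g p, and a nonempty clopen T <= U \ Y together
     with a point r of U outside Y and T;
   - let S = Y /\ g^-1 Y and A = ~(S \/ g S); vigour yields k in G supported
     in A with k (U /\ A) <= T;
   - the conjugate b = k g k^-1 is supported in Y \/ T, which misses r, and
     agrees with g on S, so a = b^-1 g is supported in U \ S, which misses p.
   The file first collects facts on supports and inverses, then subgroup
   facts, then the topological choice of Y and T, then the fragmentation
   computation, and finally derives the theorem. *)

Lemma supp_subP (f : CS -> CS) (V : set CS) :
  supp f `<=` V <-> forall x, ~ V x -> f x = x.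
Proof.
split=> [fV x nVx | fixV x fx]; first by apply: contrapT => /fV.
by apply: contrapT => /fixV.
Qed.

Lemma fixed_inv {f f' : CS -> CS} {x : CS} : cancel f f' -> f x = x -> f' x = x.
Proof. by move=> fK fx; rewrite -{1}fx fK. Qed.

Lemma supp_conj {k k' : CS -> CS} (g : CS -> CS) : cancel k k' -> cancel k' k ->
  supp (k \o g \o k') = k' @^-1` supp g.
Proof.
move=> kK k'K; apply/seteqP; split=> x /= mx e; apply: mx.
- by rewrite /= e k'K.
- by move: (congr1 k' e) => /=; rewrite kK.
Qed.

Lemma supp_inv_comp {b b' : CS -> CS} (g : CS -> CS) : cancel b b' ->
  supp (b' \o g) `<=` [set x | b x <> g x].
Proof. by move=> bK x mx e; apply: mx; rewrite /= -e bK. Qed.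

Lemma homeo_pair_uniq {f g h : CS -> CS} :
  is_homeo_pair f g -> is_homeo_pair f h -> g = h.
Proof.
move=> [_ [_ [_ gK]]] [_ [_ [fK _]]].
by apply: funext => y; rewrite -[in RHS](gK y) fK.
Qed.

Lemma subgroup_inv {G : set (CS -> CS)} {f f' : CS -> CS} :
  homeo_subgroup G -> G f -> is_homeo_pair f f' -> G f'.
Proof.
move=> [_ _ _ Ginv] Gf ff'; have [f'' Gf'' ff''] := Ginv f Gf.
by rewrite (homeo_pair_uniq ff' ff'').
Qed.

Lemma gen_sub_subgroup (G X : set (CS -> CS)) :
  homeo_subgroup G -> X `<=` G -> gen X `<=` G.
Proof.
move=> hG XG f; have [_ Gid Gcomp _] := hG.
elim=> [//|x g /XG Gx _ Gg|x x' g /XG Gx xx' _ Gg]; first exact: Gcomp.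
by apply: Gcomp => //; exact: subgroup_inv hG Gx xx'.
Qed.

Lemma pstab_subgroup (G : set (CS -> CS)) (A : set CS) :
  homeo_subgroup G -> homeo_subgroup (pstab G A).
Proof.
move=> [Ghom Gid Gcomp Ginv]; split.
- by move=> f [/Ghom].
- by [].
- by move=> f g [Gf fA] [Gg gA]; split=> [|p Ap]; [exact: Gcomp | rewrite /= fA ?gA].
- move=> f [Gf fA]; have [f' Gf' ff'] := Ginv f Gf.
  exists f' => //; split=> // p Ap.
  by case: ff' => [_ [_ [fK _]]]; exact: fixed_inv fK (fA p Ap).
Qed.

Lemma XGU_sub_pstab (G : set (CS -> CS)) (U : set CS) :
  XGU G U `<=` pstab G (~` U).
Proof.
move=> f [Gf [V [_ [[VU _] fV]]]]; split=> // p nUp.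
exact: (supp_subP f U).1 (subset_trans fV VU) p nUp.
Qed.

Section PerfectZeroDimensional.
Context {T : topologicalType}.
Hypotheses (perfT : perfect_set [set: T]) (zdT : zero_dimensional T).

(* A nonempty clopen set has a nonempty clopen subset missing a given point:
   it has a point w other than p, and a clopen set separates w from p. *)
Lemma clopen_avoid {U : set T} (p : T) : clopen U -> U !=set0 ->
  exists R : set T, [/\ clopen R, R `<=` U, ~ R p & R !=set0].
Proof.
move=> cU U0; have [x [y [Ux Uy xy]]] := perfectTP_ex.1 perfT U cU.1 U0.
have [w Uw wp] : exists2 w, U w & w != p.
  have [xp | xp] := eqVneq x p; last by exists x.
  by exists y; rewrite // -xp eq_sym.
have [W [cW Ww nWp]] := zdT _ _ wp.
by exists (U `&` W); split=> [|z []|[]|]; [exact: clopenI | | | exists w].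
Qed.

Lemma clopen_avoid2 {U : set T} (p q : T) : clopen U -> U !=set0 ->
  exists R : set T, [/\ clopen R, R `<=` U, ~ R p, ~ R q & R !=set0].
Proof.
move=> cU U0; have [R1 [cR1 R1U nR1p R10]] := clopen_avoid p cU U0.
have [R2 [cR2 R2R1 nR2q R20]] := clopen_avoid q cR1 R10.
by exists R2; split=> // [z /R2R1/R1U|/R2R1].
Qed.

End PerfectZeroDimensional.

Lemma fragmentation_pieces {U : set CS} {p q : CS} : clopen U -> U p -> U q ->
  exists Y T : set CS, exists r : CS,
    [/\ clopen Y, clopen T, Y `<=` U, T `<=` U `&` ~` Y
      & [/\ Y p, Y q, T !=set0, U r & ~ (Y `|` T) r]].
Proof.
move=> cU Up Uq.
have [R [cR RU nRp nRq [r Rr]]] :=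
  clopen_avoid2 cantor_perfect cantor_zero_dimensional p q cU (ex_intro _ p Up).
have [T [cT TR nTr T0]] :=
  clopen_avoid cantor_perfect cantor_zero_dimensional r cR (ex_intro _ r Rr).
exists (U `&` ~` R), T, r; split=> //.
- by apply: clopenI => //; exact: clopenC.
- by move=> z /TR Rz; split; [exact: RU | case=> _; apply].
- split=> //; first exact: RU.
  by case=> [[_ /(_ Rr)]|/nTr].
Qed.

Lemma supp_invariant {g g' : CS -> CS} (x : CS) : cancel g g' -> supp g x -> supp g (g x).
Proof. by move=> gK gx ggx; apply: gx; apply: (can_inj gK). Qed.

Definition kept_part (g : CS -> CS) (Y : set CS) : set CS := Y `&` g @^-1` Y.

(* The complement of S \/ g S, where S is the kept part of Y (g' being the
   inverse of g): the region in which the conjugating map may move points. *)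
Definition free_zone (g g' : CS -> CS) (Y : set CS) : set CS :=
  ~` (kept_part g Y `|` g' @^-1` kept_part g Y).

Section Fragmentation.
Variables (U Y T : set CS) (g g' k k' : CS -> CS).
Hypotheses (gK : cancel g g') (g'K : cancel g' g).
Hypotheses (kK : cancel k k') (k'K : cancel k' k).
Hypothesis suppg : supp g `<=` U.
Hypothesis suppk : supp k `<=` free_zone g g' Y.
Hypothesis kUA : k @` (U `&` free_zone g g' Y) `<=` T.

Let k_fix {x : CS} : ~ free_zone g g' Y x -> k x = x.
Proof. exact: (supp_subP k _).1 suppk x. Qed.

(* The conjugate k g k^-1 is supported in Y \/ T: it moves only images
   under k of points of supp g <= U, and k sends the part of U in the free
   zone into T while it fixes the rest of U, which lies in Y. *)
Lemma conj_supp_sub : supp (k \o g \o k') `<=` Y `|` T.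
Proof.
rewrite supp_conj // => x /= /suppg Uy; rewrite -[x]k'K.
have [Ay | nAy] := pselect (free_zone g g' Y (k' x)).
  by right; apply: kUA; exists (k' x).
left; rewrite k_fix //.
by case: (contrapT nAy) => [[]|[_]] //=; rewrite g'K.
Qed.

(* On the kept part of Y the conjugate k g k^-1 agrees with g, because k
   fixes both x and g x there. *)
Lemma conj_agrees_on_kept {x : CS} : kept_part g Y x -> (k \o g \o k') x = g x.
Proof.
move=> Sx; have nAx : ~ free_zone g g' Y x by apply; left.
have nAgx : ~ free_zone g g' Y (g x) by apply; right; rewrite /= gK.
by rewrite /= (fixed_inv kK (k_fix nAx)) k_fix.
Qed.

Lemma conj_quotient_supp (b' : CS -> CS) :
  cancel (k \o g \o k') b' -> Y `<=` U -> T `<=` U ->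
  supp (b' \o g) `<=` U `&` ~` kept_part g Y.
Proof.
move=> bK YU TU; apply: subset_trans (supp_inv_comp g bK) _ => x bgx.
have bU : supp (k \o g \o k') `<=` U by apply: subset_trans conj_supp_sub _ => y [/YU|/TU].
split=> [|Sx]; last exact: bgx (conj_agrees_on_kept Sx).
apply: contrapT => nUx; apply: bgx.
by rewrite ((supp_subP _ _).1 bU x nUx) ((supp_subP _ _).1 suppg x nUx).
Qed.

End Fragmentation.
Arguments conj_supp_sub {U Y T g g' k k'}.
Arguments conj_quotient_supp {U Y T g g' k k'}.

Lemma vigorous_push {G : set (CS -> CS)} {A U T : set CS} {z : CS} :
  vigorous G -> clopen A -> clopen U -> clopen T ->
  U `&` A !=set0 -> T !=set0 -> T `<=` U `&` A -> A z -> ~ U z ->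
  exists2 k, G k & supp k `<=` A /\ k @` (U `&` A) `<=` T.
Proof.
move=> vig cA cU cT [r UAr] [t Tt] TUA Az nUz.
apply: (vig A (U `&` A) T cA (clopenI cU cA) cT).
- by move=> e; rewrite e in UAr.
- by move=> e; rewrite e in Tt.
- split=> [y [] //|e]; have : (U `&` A) z by rewrite e.
  by case.
- split=> [y /TUA [] //|e]; have : T z by rewrite e.
  by case/TUA.
Qed.

Lemma XGU_intro {G : set (CS -> CS)} {U V : set CS} {f : CS -> CS} {x : CS} :
  G f -> clopen V -> V `<=` U -> U x -> ~ V x -> supp f `<=` V -> XGU G U f.
Proof.
move=> Gf cV VU Ux nVx fV; split=> //; exists V.
split; [done | split; [split; [done | move=> e] | done]].
by apply: nVx; rewrite e.
Qed.

Lemma pstab_factor {G : set (CS -> CS)} {U : set CS} {g : CS -> CS} :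
  homeo_subgroup G -> vigorous G -> clopen U -> U <> set0 -> U <> setT ->
  pstab G (~` U) g -> exists b a, [/\ XGU G U b, XGU G U a & g = b \o a].
Proof.
move=> hG vig cU U0 UT [Gg gfix]; have [_ _ Gcomp Ginv] := hG.
have [g' _ [cg [cg' [gK g'K]]]] := Ginv g Gg.
have suppg : supp g `<=` U := (supp_subP g U).2 gfix.
have /set0P [p Up] : U != set0 by apply/eqP.
have Ugp : U (g p).
  by have [-> | /(supp_invariant p gK) /suppg] := pselect (g p = p).
have [Y [T [r [cY cT YU TUY [Yp Ygp T0 Ur nYTr]]]]] := fragmentation_pieces cU Up Ugp.
have [z nUz] : exists z, ~ U z.
  apply: contrapT => nz; apply: UT; apply/seteqP; split=> // x _.
  by apply: contrapT => nUx; apply: nz; exists x.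
set A := free_zone g g' Y.
have cS : clopen (kept_part g Y) by apply: clopenI => //; exact: preimage_clopen.
have cA : clopen A by apply: (clopenC set0); apply: clopenU => //; exact: preimage_clopen.
have Az : A z by case=> [[/YU]|[_]] //=; rewrite g'K => /YU.
have TA : T `<=` U `&` A.
  by move=> y /TUY [Uy nYy]; split=> //; case=> [[/nYy]|[_]] //=; rewrite g'K.
have UA0 : U `&` A !=set0 by case: T0 => t /TA; exists t.
have [k Gk [suppk kUA]] := vigorous_push vig cA cU cT UA0 T0 TA Az nUz.
have [k' Gk' [_ [_ [kK k'K]]]] := Ginv k Gk.
have Gb : G (k \o g \o k') := Gcomp _ _ Gk' (Gcomp _ _ Gg Gk).
have [b' Gb' [_ [_ [bK b'K]]]] := Ginv _ Gb.
exists (k \o g \o k'), (b' \o g); split.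
- apply: (XGU_intro (x := r)) Gb (clopenU cY cT) _ Ur nYTr _.
    by move=> y [/YU|/TUY []].
  exact: conj_supp_sub g'K kK k'K suppg suppk kUA.
- apply: (XGU_intro (x := p)) (Gcomp _ _ Gg Gb') (clopenI cU (clopenC set0 cS)) _ Up _ _.
  + by move=> y [].
  + by case=> _; apply.
  + apply: conj_quotient_supp gK g'K kK k'K suppg suppk kUA _ bK YU _.
    by move=> y /TUY [].
- by apply: funext => x; exact: (esym (b'K (g x))).
Qed.

Theorem lemma2p7 (G : set (CS -> CS)) (U : set CS) :
  homeo_subgroup G -> vigorous G ->
  clopen U -> U <> set0 -> U <> setT ->
  gen (XGU G U) = pstab G (~` U).
Proof.
move=> hG vig cU U0 UT; apply/seteqP; split.
  by apply: gen_sub_subgroup; [exact: pstab_subgroup | exact: XGU_sub_pstab].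
move=> g /(pstab_factor hG vig cU U0 UT) [b [a [Xb Xa ->]]].
exact: gen_mul Xb (gen_mul Xa (gen_id _)).
Qed.
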